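(* Let $p$ be a prime, $n\geq1$, and let $f\in\mathcal{Q}_n$ have degree $m\geq1$. Then for each $1\leq k\leq m$ there exists $q_k\in\mathbb{Z}[X]$ of degree $m-k$ such that $$f(X)=q_k(X)G_k(X)+R_{k-1}(X),\qquad R_{k-1}(X)=f(0)+\sum_{h=1}^{k-1}q_h(hp)G_h(X),$$ and $q_k(X)=q_{k+1}(X)(X-kp)+q_k(kp)$ for $k=1,\dots,m-1$. Moreover, for each such $k$: (i) if $v_p((pk)!)<n$, then $p^{\,n-v_p((pk)!)}$ divides $q_k(kp)$; (ii) $q_k(kp)G_k(X)\in\mathcal{Q}_n$, and if $k<p$ then $q_k(kp)G_k(X)\in\mathcal{M}^n$; (iii) $R_{k-1}\in\mathcal{Q}_n$ for all $k=1,\dots,m$, and $R_{k-1}\in\mathcal{M}^n$ for all $k$ with $1\leq k\leq\min(m,p)$.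
   Context: Fix a prime $p$ and $n\geq 1$. $\mathcal{M}=(p,X)\subseteq\mathbb{Z}[X]$ and $\mathcal{Q}_n=\bigcap_{i\in\{0,\dots,p^n-1\},\ p\mid i}(p^n,X-i)$, i.e. the set of $f\in\mathbb{Z}[X]$ with $p^n\mid f(i)$ for every integer $i$ divisible by $p$. For $k\geq1$, $G_k(X)=\prod_{h=0}^{k-1}(X-hp)$, and $G_0(X)=1$. $v_p$ denotes the $p$-adic valuation. *)

From HB Require Import structures.
From mathcomp Require Import all_boot all_order all_algebra.
Set Implicit Arguments. Unset Strict Implicit. Unset Printing Implicit Defensive.
Import Order.TTheory GRing.Theory Num.Theory.
Local Open Scope ring_scope.

Definition in_ideal_aXc (a c : int) (f : {poly int}) : Prop :=
  exists u v : {poly int}, f = a%:P * u + ('X - c%:P) * v.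

Definition inQ (p n : nat) (f : {poly int}) : Prop :=
  forall i : nat, (i < p ^ n)%N -> (p %| i)%N ->
    in_ideal_aXc ((p ^ n)%:Z) (i%:Z) f.

(* M^n where M = (p, X): ideal generated by the p^j X^(n-j), 0 <= j <= n *)
Definition inMpow (p n : nat) (f : {poly int}) : Prop :=
  exists g : nat -> {poly int},
    f = \sum_(j < n.+1) ((p ^ j)%:Z)%:P * 'X^(n - j) * g j.

Definition G (p k : nat) : {poly int} :=
  \prod_(h < k) ('X - ((h * p)%N%:Z)%:P).

(* R_{k-1}(X) = f(0) + sum_{h=1}^{k-1} q_h(hp) G_h(X); here Rpoly f q p k = R_{k-1} *)
Definition Rpoly (f : {poly int}) (q : nat -> {poly int}) (p k : nat) : {poly int} :=
  (f.[0])%:P + \sum_(1 <= h < k) (q h).[(h * p)%N%:Z] *: G p h.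

From HB Require Import structures.
From mathcomp Require Import all_boot all_order all_algebra.
From mathcomp Require Import zify ring.
Import Order.TTheory GRing.Theory Num.Theory.
Local Open Scope ring_scope.

(* Divide f repeatedly by the linear factors X - kp:
   q_0 = f and q_k = q_(k+1) (X - kp) + c_k with c_k = q_k(kp).  Unfolding
   the recursion gives the Newton expansion f = q_k G_k + sum_(h<k) c_h G_h,
   where the term h = 0 is f(0); this is the displayed identity, and the
   degrees follow because X - kp is monic.
   The arithmetic core is a description of Q_n by values:  f is in Q_n iff
   p^n divides f(jp) for every j (x - y divides g(x) - g(y)).  Since
   G_h(jp) = j^_h p^h vanishes for j < h and is divisible by
   h! p^h, whose p-part is p^(v_p((ph)!)) by Legendre, evaluating the
   expansion at kp and inducting on k gives  p^n | c_k p^(v_p((pk)!)),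
   which is (i).  Scaled Newton polynomials c_h G_h are then in Q_n by the
   value criterion, and, when h < p (so v_p((ph)!) = h), in M^n by a
   coefficient criterion: a polynomial whose i-th coefficient is divisible
   by p^(n-i) for every i < n lies in M^n, and the i-th coefficient of G_h
   is divisible by p^(h-i).  Both criteria are stable under sums, giving (ii)
   and (iii). *)

Lemma logn_fact_pmulD p h a : prime p -> (a < p)%N ->
  logn p (p * h + a)`! = logn p (p * h)`!.
Proof.
move=> pp; elim: a => [|a IH] ha; first by rewrite addn0.
rewrite addnS factS lognM ?fact_gt0 // IH ?(ltnW ha) // logn_coprime //.
by rewrite prime_coprime // -addnS dvdn_addr ?dvdn_mulr // gtnNdvd.
Qed.

Lemma logn_fact_pmul p h : prime p -> logn p (p * h)`! = (h + logn p h`!)%N.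
Proof.
move=> pp; have p_gt0 := prime_gt0 pp.
elim: h => [|h IH]; first by rewrite muln0.
have split_last : (p * h.+1 = (p * h + p.-1).+1)%N by rewrite mulnS; lia.
rewrite split_last factS lognM ?fact_gt0 //.
rewrite logn_fact_pmulD ?prednK ?ltn_predL //.
rewrite -split_last lognM // (logn_prime _ pp) eqxx IH.
by rewrite factS (lognM _ (ltn0Sn h)) ?fact_gt0 //; lia.
Qed.

Lemma logn_fact_pmul_small p h : prime p -> (h < p)%N -> logn p (p * h)`! = h.
Proof.
move=> pp hp; rewrite logn_fact_pmul // logn_fact // big1_seq ?addn0 // => i.
rewrite mem_index_iota => /andP [_ /andP [i_gt0 _]].
by apply: divn_small; apply: leq_trans hp (leq_pexp2l (prime_gt0 pp) i_gt0).
Qed.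

(* The p-part of h! p^h, which is the leading value G_h(hp). *)
Lemma logn_fact_expn p h : prime p -> logn p (h`! * p ^ h) = logn p (p * h)`!.
Proof.
move=> pp; rewrite logn_fact_pmul // lognM ?fact_gt0 ?expn_gt0 ?prime_gt0 //.
by rewrite pfactorK // addnC.
Qed.

Lemma dvdz_pexp_shift p n k i (c : int) : (0 < p)%N -> (i < n)%N ->
  ((p ^ n)%N%:Z %| c * (p ^ k)%N%:Z)%Z ->
  ((p ^ (n - i))%N%:Z %| c * (p ^ (k - i))%N%:Z)%Z.
Proof.
move=> p_gt0 lt_in dvd_n.
have pi_neq0 : (p ^ i)%N%:Z != 0 by rewrite eqz_nat -lt0n expn_gt0 p_gt0.
have split_n : (p ^ n)%N%:Z = (p ^ (n - i))%N%:Z * (p ^ i)%N%:Z.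
  by rewrite -PoszM -expnD subnK // ltnW.
have exchange : c * (p ^ (k - i))%N%:Z * (p ^ i)%N%:Z
              = c * (p ^ k)%N%:Z * (p ^ (i - k))%N%:Z.
  rewrite -mulrA -PoszM -expnD -mulrA -PoszM -expnD.
  by congr (c * (p ^ _)%N%:Z); lia.
by rewrite -(dvdz_mul2r pi_neq0) -split_n exchange dvdz_mulr.
Qed.

Section LinearDivision.
Variable R : comNzRingType.

Lemma linear_division_ex (g : {poly R}) (a : R) :
  exists t : {poly R}, g - (g.[a])%:P == t * ('X - a%:P).
Proof.
have /factor_theorem [t ->] : root (g - (g.[a])%:P) a.
  by rewrite /root !hornerE subrr.
by exists t.
Qed.

Definition linear_quot (g : {poly R}) (a : R) : {poly R} :=
  xchoose (linear_division_ex g a).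

Lemma linear_quotE (g : {poly R}) (a : R) :
  g = linear_quot g a * ('X - a%:P) + (g.[a])%:P.
Proof.
by rewrite /linear_quot -(eqP (xchooseP (linear_division_ex g a))) addrNK.
Qed.

End LinearDivision.
Arguments linear_quot {R} g a.
Arguments linear_quotE {R} g a.

Lemma horner_sub_dvdz (g : {poly int}) (x y : int) : (x - y %| g.[x] - g.[y])%Z.
Proof. by rewrite {1}(linear_quotE g y) !hornerE addrK dvdz_mull. Qed.

Fixpoint newton_quot (f : {poly int}) (p k : nat) : {poly int} :=
  if k is k'.+1 then linear_quot (newton_quot f p k') (k' * p)%N%:Z else f.
(* Keep q_(k+1) folded, so that it stays a single unknown for ring. *)
Arguments newton_quot : simpl never.

Definition newton_coef (f : {poly int}) (p k : nat) : int :=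
  (newton_quot f p k).[(k * p)%N%:Z].

Lemma newton_quotS f p k :
  newton_quot f p k
  = newton_quot f p k.+1 * ('X - ((k * p)%N%:Z)%:P) + (newton_coef f p k)%:P.
Proof. exact: linear_quotE. Qed.

Lemma G0 p : G p 0 = 1.
Proof. by rewrite /G big_ord0. Qed.

Lemma GS p k : G p k.+1 = G p k * ('X - ((k * p)%N%:Z)%:P).
Proof. by rewrite /G big_ord_recr. Qed.

Lemma newton_expansion f p k :
  f = newton_quot f p k * G p k + \sum_(h < k) newton_coef f p h *: G p h.
Proof.
elim: k => [|k IH]; first by rewrite G0 big_ord0 mulr1 addr0.
rewrite big_ord_recr /= GS {1}IH {1}(newton_quotS f p k) -mul_polyC.
ring.
Qed.

Lemma Rpoly_newton f p k : (1 <= k)%N ->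
  Rpoly f (newton_quot f p) p k = \sum_(h < k) newton_coef f p h *: G p h.
Proof.
move=> k_gt0; rewrite /Rpoly.
rewrite -(big_mkord xpredT (fun h => newton_coef f p h *: G p h)).
by rewrite (big_ltn k_gt0) G0 /newton_coef mul0n alg_polyC.
Qed.

(* Each division by the monic X - kp lowers the size by one. *)
Lemma size_newton_quot (p m : nat) (f : {poly int}) : size f = m.+1 ->
  forall k, (k <= m)%N -> size (newton_quot f p k) = (m - k).+1.
Proof.
move=> size_f; elim => [|k IH] le_km; first by rewrite subn0.
have size_k := IH (ltnW le_km).
have size_sub : size (newton_quot f p k - (newton_coef f p k)%:P) = (m - k).+1.
  rewrite size_polyDl size_k // size_polyN.
  by rewrite (leq_ltn_trans (size_polyC_leq1 _)) //; lia.
have quot_eq : newton_quot f p k - (newton_coef f p k)%:P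
               = newton_quot f p k.+1 * ('X - ((k * p)%N%:Z)%:P).
  by rewrite {1}(newton_quotS f p k) addrK.
have quot_neq0 : newton_quot f p k.+1 != 0.
  by apply/eqP => quot0; move: size_sub; rewrite quot_eq quot0 mul0r size_poly0.
move: size_sub; rewrite quot_eq size_Mmonic ?monicXsubC // size_XsubC.
lia.
Qed.

Definition dvd_on_grid (p n : nat) (g : {poly int}) : Prop :=
  forall j : nat, ((p ^ n)%N%:Z %| g.[(j * p)%N%:Z])%Z.

Lemma inQ_gridP p n g : (0 < p)%N -> inQ p n g <-> dvd_on_grid p n g.
Proof.
move=> p_gt0; split => [inQ_g j | grid_g i _ /dvdnP [j ->]]; last first.
  have /dvdzP [t value_j] := grid_g j.
  exists t%:P, (linear_quot g (j * p)%N%:Z).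
  by rewrite {1}(linear_quotE g (j * p)%N%:Z) value_j polyCM; ring.
set x := (j * p)%N; set i := (x %% p ^ n)%N.
have p_dvd_i : (p %| i)%N.
  rewrite /i; case: n {inQ_g i} => [|n]; first by rewrite expn0 modn1 dvdn0.
  have p_dvd_pn : (p %| p ^ n.+1)%N by rewrite dvdn_exp.
  by rewrite /dvdn (modn_dvdm _ p_dvd_pn) modnMl.
have pn_gt0 : (0 < p ^ n)%N by rewrite expn_gt0 p_gt0.
have [u [v ideal_i]] := inQ_g i (ltn_pmod _ pn_gt0) p_dvd_i.
have value_i : g.[i%:Z] = (p ^ n)%N%:Z * u.[i%:Z].
  by rewrite ideal_i !hornerE subrr; ring.
have x_i_dvd : ((p ^ n)%N%:Z %| x%:Z - i%:Z)%Z.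
  by rewrite {1}(divn_eq x (p ^ n)) PoszD addrK PoszM dvdz_mull.
rewrite -(subrK g.[i%:Z] g.[x%:Z]) rpredD //; last by rewrite value_i dvdz_mulr.
exact: dvdz_trans x_i_dvd (horner_sub_dvdz g x%:Z i%:Z).
Qed.

Lemma horner_G p h j : (G p h).[(j * p)%N%:Z] = (j ^_ h * p ^ h)%N%:Z.
Proof.
elim: h => [|h IH]; first by rewrite G0 hornerC ffactn0 expn0.
rewrite GS hornerM IH hornerXsubC ffactnSr expnS.
have [lt_jh | le_hj] := ltnP j h; first by rewrite ffact_small // !mul0n mul0r.
rewrite subzn ?leq_mul2r ?le_hj ?orbT // -mulnBl -PoszM.
by congr Posz; ring.
Qed.

(* Hence p^(v_p((ph)!)) divides every value G_h(jp), since h! p^h does. *)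
Lemma G_grid_dvd p h j : prime p ->
  ((p ^ logn p (p * h)`!)%N%:Z %| (G p h).[(j * p)%N%:Z])%Z.
Proof.
move=> pp; rewrite horner_G dvdzE /= -logn_fact_expn // -bin_ffact -mulnA.
by apply: dvdn_mull; apply: pfactor_dvdnn.
Qed.

(* Evaluate the
   expansion at kp: all G_h with h > k vanish there, the earlier terms are
   divisible by p^n by induction, and G_k(kp) = k! p^k has p-part
   p^(v_p((pk)!)) times a factor prime to p. *)
Lemma newton_coef_dvd p n f : prime p -> dvd_on_grid p n f -> forall k,
  ((p ^ n)%N%:Z %| newton_coef f p k * (p ^ logn p (p * k)`!)%N%:Z)%Z.
Proof.
move=> pp grid_f; elim/ltn_ind => k IH; set x := (k * p)%N%:Z.
have value_kp : f.[x] = \sum_(h < k) newton_coef f p h * (G p h).[x]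
                        + newton_coef f p k * (G p k).[x].
  rewrite {1}(newton_expansion f p k.+1) hornerD hornerM horner_G.
  rewrite ffact_small // mul0n mulr0 add0r horner_sum big_ord_recr /= hornerZ.
  by congr (_ + _); apply: eq_bigr => h _; rewrite hornerZ.
have lead_dvd : ((p ^ n)%N%:Z %| newton_coef f p k * (G p k).[x])%Z.
  rewrite (_ : _ * _ = f.[x] - \sum_(h < k) newton_coef f p h * (G p h).[x]).
    rewrite rpredB ?grid_f // rpred_sum // => h _.
    apply: dvdz_trans (IH h (ltn_ord h)) _.
    exact: dvdz_mul (dvdzz _) (G_grid_dvd _ _ _ pp).
  by rewrite value_kp addrC addKr.
have lead_gt0 : (0 < k`! * p ^ k)%N.
  by rewrite muln_gt0 fact_gt0 expn_gt0 prime_gt0.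
have [u coprime_pu lead_split] := pfactor_coprime pp lead_gt0.
have coprime_pnu : coprimez (p ^ n)%N%:Z u%:Z by rewrite coprimezE /= coprimeXl.
move: lead_dvd; rewrite /x horner_G ffactnn lead_split logn_fact_expn //.
by rewrite PoszM mulrCA mulrC (Gauss_dvdzl _ coprime_pnu).
Qed.

(* The coefficient criterion for M^n: if p^(n-i) divides the i-th
   coefficient of g for every i < n, then g = sum_(i<n) p^(n-i) a_i X^i + X^n h
   lies in M^n. *)
Definition coef_dvd (p n : nat) (g : {poly int}) : Prop :=
  forall i : nat, (i < n)%N -> ((p ^ (n - i))%N%:Z %| g`_i)%Z.

Lemma coef_dvd_inMpow p n g : coef_dvd p n g -> inMpow p n g.
Proof.
move=> coef_g.
exists (fun j => if j is j'.+1 then ((g`_(n - j'.+1) %/ (p ^ j'.+1)%N%:Z)%Z)%:P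
                 else drop_poly n g).
rewrite big_ord_recl /= subn0 expn0 mul1r.
rewrite -{1}(poly_take_drop n g) addrC mulrC; congr (_ + _).
rewrite /take_poly poly_def (reindex_inj rev_ord_inj) /=.
apply: eq_bigr => i _; rewrite /bump /= add0n add1n.
have lt_in : (n - i.+1 < n)%N by have := ltn_ord i; lia.
have := coef_g _ lt_in; rewrite (_ : (n - (n - i.+1) = i.+1)%N); last first.
  by have := ltn_ord i; lia.
move=> /divzK coefK.
rewrite -mulrA [_ * _%:P]mulrC mulrA -polyCM.
by rewrite [X in (X)%:P * _]mulrC coefK mul_polyC.
Qed.

(* The i-th coefficient of G_k is divisible by p^(k-i): each factor
   X - hp contributes either X or a multiple of p. *)
Lemma G_coef_dvd p k i : ((p ^ (k - i))%N%:Z %| (G p k)`_i)%Z.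
Proof.
elim: k i => [|k IH] i; first by rewrite sub0n expn0 dvd1z.
rewrite GS mulrBr coefB coefMX coefMC rpredB //.
  by case: i => [|i] //=; rewrite ?dvdz0 // subSS IH.
apply: dvdz_trans (_ : (p ^ (k - i) * p)%N%:Z %| _)%Z.
  by rewrite dvdzE /= -expnSr dvdn_exp2l //; lia.
rewrite (PoszM (p ^ (k - i))%N p); apply: dvdz_mul (IH i) _.
by rewrite dvdzE /= dvdn_mull.
Qed.

Lemma scaleG_grid p n k c : prime p ->
  ((p ^ n)%N%:Z %| c * (p ^ logn p (p * k)`!)%N%:Z)%Z ->
  dvd_on_grid p n (c *: G p k).
Proof.
move=> pp c_dvd j; rewrite hornerZ.
have /dvdzP [t ->] := G_grid_dvd p k j pp.
by rewrite mulrCA dvdz_mull.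
Qed.

Lemma scaleG_coef p n k c : (0 < p)%N ->
  ((p ^ n)%N%:Z %| c * (p ^ k)%N%:Z)%Z -> coef_dvd p n (c *: G p k).
Proof.
move=> p_gt0 c_dvd i lt_in; rewrite coefZ.
have /dvdzP [t ->] := G_coef_dvd p k i.
by rewrite mulrCA dvdz_mull // dvdz_pexp_shift.
Qed.

Lemma grid_sum p n k (F : nat -> {poly int}) :
  (forall h, (h < k)%N -> dvd_on_grid p n (F h)) ->
  dvd_on_grid p n (\sum_(h < k) F h).
Proof.
by move=> grid_F j; rewrite horner_sum rpred_sum // => h _; apply: grid_F.
Qed.

Lemma coef_dvd_sum p n k (F : nat -> {poly int}) :
  (forall h, (h < k)%N -> coef_dvd p n (F h)) ->
  coef_dvd p n (\sum_(h < k) F h).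
Proof.
by move=> coef_F i lt_in; rewrite coef_sum rpred_sum // => h _; apply: coef_F.
Qed.

Section NewtonTerms.
Variables (p n : nat) (f : {poly int}).
Hypotheses (pp : prime p) (grid_f : dvd_on_grid p n f).

Lemma newton_term_grid h : dvd_on_grid p n (newton_coef f p h *: G p h).
Proof. exact: scaleG_grid _ _ _ _ pp (newton_coef_dvd _ _ _ pp grid_f h). Qed.

Lemma newton_term_coef h :
  (h < p)%N -> coef_dvd p n (newton_coef f p h *: G p h).
Proof.
move=> lt_hp; apply: scaleG_coef _ _ _ _ (prime_gt0 pp) _.
by have := newton_coef_dvd _ _ _ pp grid_f h; rewrite logn_fact_pmul_small.
Qed.

End NewtonTerms.

Theorem mainTheorem11 (p n m : nat) (f : {poly int}) :
  prime p -> (1 <= n)%N -> inQ p n f -> (1 <= m)%N -> size f = m.+1 ->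
  exists q : nat -> {poly int},
    (forall k : nat, (1 <= k <= m)%N ->
       size (q k) = (m - k).+1 /\ f = q k * G p k + Rpoly f q p k)
    /\ (forall k : nat, (1 <= k <= m - 1)%N ->
       q k = q k.+1 * ('X - ((k * p)%N%:Z)%:P) + ((q k).[(k * p)%N%:Z])%:P)
    /\ (forall k : nat, (1 <= k <= m)%N ->
         ((logn p (p * k)`! < n)%N ->
            ((p ^ (n - logn p (p * k)`!))%N%:Z %| (q k).[(k * p)%N%:Z])%Z)
      /\ (inQ p n ((q k).[(k * p)%N%:Z] *: G p k)
          /\ ((k < p)%N -> inMpow p n ((q k).[(k * p)%N%:Z] *: G p k)))
      /\ (inQ p n (Rpoly f q p k)
          /\ ((k <= minn m p)%N -> inMpow p n (Rpoly f q p k)))).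
Proof.
move=> pp _ inQ_f _ size_f; have p_gt0 := prime_gt0 pp.
have grid_f := proj1 (inQ_gridP _ _ _ p_gt0) inQ_f.
exists (newton_quot f p); split; [|split].
- move=> k /andP [k_gt0 le_km]; split; first exact: size_newton_quot.
  by rewrite Rpoly_newton // {1}(newton_expansion f p k).
- by move=> k _; apply: newton_quotS.
move=> k /andP [k_gt0 le_km]; split; [|split; split].
- move=> lt_vn; have := newton_coef_dvd _ _ _ pp grid_f k.
  move/(dvdz_pexp_shift _ _ _ _ _ p_gt0 lt_vn).
  by rewrite subnn expn0 mulr1.
- exact/(inQ_gridP _ _ _ p_gt0)/newton_term_grid.
- by move=> lt_kp; apply/coef_dvd_inMpow/newton_term_coef.
- rewrite Rpoly_newton //; apply/(inQ_gridP _ _ _ p_gt0).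
  by apply: (grid_sum _ _ _ (fun h => newton_coef f p h *: G p h)) => h _;
    apply: newton_term_grid.
- move=> le_k_min; rewrite Rpoly_newton //.
  apply/coef_dvd_inMpow.
  apply: (coef_dvd_sum _ _ _ (fun h => newton_coef f p h *: G p h)).
  move=> h lt_hk; apply: newton_term_coef => //.
  exact: leq_trans lt_hk (leq_trans le_k_min (geq_minr _ _)).
Qed.
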